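(* For all $v,r,t\in\mathbb{R}$, $$|v|+|r-v|+|r+t-v|-|t-v|+|r-t|-|t|\geq\max\left(|r|,\,|v|-|r|\right).$$ *)

From Stdlib Require Import Reals Lra.

(* Both bounds come from triangle inequalities.  For [|v| - |r|], the four
   inequalities bounding [|t|] and [|t - v|] by pairs among [|r - v|],
   [|r + t - v|], [|r - t|], [|r|] add up to exactly twice what is needed.
   For [|r|], one uses [|x| + |y| = max (|x + y|, |x - y|)] with [x = t] and
   [y = t - v]: the subtracted terms equal [|2t - v|] or [|v|], and in either
   case the remaining terms dominate them plus [|r|]. *)
From Stdlib Require Import Reals Lra.
Open Scope R_scope.

Lemma Rabs_le_of_add (z x y : R) : z = x + y -> Rabs z <= Rabs x + Rabs y.
Proof. intros ->; apply Rabs_triang. Qed.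

Lemma Rabs_le_of_sub (z x y : R) : z = x - y -> Rabs z <= Rabs x + Rabs y.
Proof. intros ->; rewrite <- (Rabs_Ropp y); apply Rabs_triang. Qed.

Lemma Rabs_add_Rabs_cases (x y : R) :
  Rabs x + Rabs y = Rabs (x + y) \/ Rabs x + Rabs y = Rabs (x - y).
Proof.
  unfold Rabs; repeat destruct Rcase_abs; first [left; lra | right; lra].
Qed.

Lemma lemma2p2p5_lhs_ge_Rabs (v r t : R) :
  Rabs r <=
  Rabs v + Rabs (r - v) + Rabs (r + t - v) - Rabs (t - v) + Rabs (r - t) - Rabs t.
Proof.
  pose proof (Rabs_le_of_add (2 * r - v) (r + t - v) (r - t) ltac:(ring)) as H2r.
  pose proof (Rabs_le_of_sub (t + (t - v)) (r + t - v) (r - t) ltac:(ring)) as H2t.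
  pose proof (Rabs_le_of_add r v (r - v) ltac:(ring)) as Hr.
  pose proof (Rabs_le_of_sub r (2 * r - v) (r - v) ltac:(ring)) as Hr'.
  destruct (Rabs_add_Rabs_cases t (t - v)) as [Hsum | Hdiff].
  - lra.
  - replace (t - (t - v)) with v in Hdiff by ring; lra.
Qed.

Lemma lemma2p2p5_lhs_ge_Rabs_sub (v r t : R) :
  Rabs v - Rabs r <=
  Rabs v + Rabs (r - v) + Rabs (r + t - v) - Rabs (t - v) + Rabs (r - t) - Rabs t.
Proof.
  pose proof (Rabs_le_of_sub t (r + t - v) (r - v) ltac:(ring)).
  pose proof (Rabs_le_of_sub t r (r - t) ltac:(ring)).
  pose proof (Rabs_le_of_sub (t - v) (r - v) (r - t) ltac:(ring)).
  pose proof (Rabs_le_of_sub (t - v) (r + t - v) r ltac:(ring)).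
  lra.
Qed.

Theorem lemma2p2p5 (v r t : R) :
  Rabs v + Rabs (r - v) + Rabs (r + t - v) - Rabs (t - v) + Rabs (r - t) - Rabs t
  >= Rmax (Rabs r) (Rabs v - Rabs r).
Proof.
  apply Rle_ge, Rmax_lub.
  - apply lemma2p2p5_lhs_ge_Rabs.
  - apply lemma2p2p5_lhs_ge_Rabs_sub.
Qed.
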